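(* Let $k\in\mathbb{N}$ and for $n\in\mathbb{N}$ let $g(n)$ denote the maximum number of edges of an induced subgraph on $n$ vertices of the rectangular grid $\mathbb{Z}^k$. Then $g(1)=0$ and, for $n\ge 2$, \[ g(n)\le\max_{\substack{n_1+n_2=n\\ n_1,n_2\ge1}}\left(\min(n_1,n_2)+g(n_1)+g(n_2)\right). \]
   Context: The rectangular grid $\mathbb{Z}^k$ is the infinite graph with vertex set $\mathbb{Z}^k$ in which two points are adjacent iff their Manhattan distance $\sum_{i=1}^k|x_i-y_i|$ equals $1$. *)

From HB Require Import structures.
From mathcomp Require Import all_boot all_order all_algebra.
From mathcomp Require Import finmap.
Set Implicit Arguments. Unset Strict Implicit. Unset Printing Implicit Defensive.
Import Order.TTheory GRing.Theory Num.Theory.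
Local Open Scope fset_scope.

Definition point (k : nat) := (k.-tuple int)%type.

Definition grid_adj (k : nat) (x y : point k) : bool :=
  (\sum_(i < k) `|(tnth x i - tnth y i)%R|%N)%N == 1%N.

Definition induced_edges (k : nat) (S : {fset point k}) : {fset {fset point k}} :=
  [fset [fset x; y] | x in S, y in S & grid_adj x y].

Definition num_edges (k : nat) (S : {fset point k}) : nat := #|` induced_edges S|.

(* g is the function n |-> maximum number of edges of an induced subgraph of Z^k
   on n vertices (stated as the least upper bound in nat, which is the maximum
   whenever an n-vertex set exists). *)
Definition is_max_edges_fun (k : nat) (g : nat -> nat) : Prop :=
  forall n : nat,
    (forall S : {fset point k}, #|` S| = n -> num_edges S <= g n) /\
    (forall m : nat, (forall S : {fset point k}, #|` S| = n -> num_edges S <= m) ->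
       g n <= m).

(* Pick two distinct vertices of S and a coordinate i in which they differ, and cut S by a
   hyperplane orthogonal to e_i into a nonempty lower part A and a nonempty upper part B.
   Every edge between A and B has the form {x, x + e_i}, so it is determined both by its
   endpoint x in A and by its endpoint x + e_i in B: there are at most min(|A|, |B|) such
   edges, while the edges inside A and inside B number at most g(|A|) and g(|B|). *)

From mathcomp Require Import all_boot all_order all_algebra.
From mathcomp Require Import finmap zify.
Import Order.TTheory GRing.Theory Num.Theory.
Set Implicit Arguments. Unset Strict Implicit.

Section GridAdjacency.
Local Open Scope ring_scope.
Variable k : nat.
Implicit Types (x y : point k) (i : 'I_k).

Lemma grid_adjC x y : grid_adj x y = grid_adj y x.
Proof.
rewrite /grid_adj; congr (_ == _); apply: eq_bigr => j _.
by rewrite -abszN opprB.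
Qed.

Lemma grid_adjxx x : grid_adj x x = false.
Proof. by rewrite /grid_adj big1 // => j _; rewrite subrr. Qed.

Definition gshift x i (d : int) : point k :=
  [tuple if j == i then tnth x j + d else tnth x j | j < k].

Lemma gshiftK x i d : gshift (gshift x i d) i (- d) = x.
Proof.
apply: eq_from_tnth => j; rewrite !tnth_mktuple.
by case: eqP => // _; rewrite addrK.
Qed.

Lemma grid_adj_gshift x y i :
  grid_adj x y -> tnth x i < tnth y i -> y = gshift x i 1.
Proof.
rewrite /grid_adj (bigD1 i) //= => /eqP adj_xy lt_xy.
have dist_i : `|tnth x i - tnth y i|%N = 1%N.
  have : (0 < `|tnth x i - tnth y i|)%N by rewrite absz_gt0 subr_eq0 lt_eqF.
  lia.
have dist_other : (\sum_(j < k | j != i) `|tnth x j - tnth y j|%N = 0)%N.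
  by apply/eqP; rewrite -(eqn_add2l 1) -{1}dist_i adj_xy.
apply: eq_from_tnth => j; rewrite tnth_mktuple; case: eqP => [->|/eqP ne_ji].
  lia.
by move/eqP: dist_other; rewrite sum_nat_eq0 => /forallP /(_ j); rewrite ne_ji /=; lia.
Qed.

End GridAdjacency.

Local Open Scope fset_scope.

Lemma induced_edgesP k (S : {fset point k}) e :
  reflect (exists x y, [/\ x \in S, y \in S, grid_adj x y & e = [fset x; y]])
    (e \in induced_edges S).
Proof.
apply: (iffP (imfset2P _ _ _ _ _)).
  by move=> [x xS [y]]; rewrite !inE /= => /andP [yS adj_xy] ->; exists x, y.
move=> [x [y [xS yS adj_xy ->]]]; exists x => //.
by exists y => //; rewrite inE /= yS.
Qed.

Lemma num_edges_card_le1 k (S : {fset point k}) : #|` S| <= 1 -> num_edges S = 0.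
Proof.
move=> S_small; apply/eqP; rewrite cardfs_eq0; apply/eqP/fsetP => e; rewrite inE.
apply/negbTE/induced_edgesP => -[x [y [xS yS adj_xy _]]].
have ne_xy : x != y by apply: contraTneq adj_xy => ->; rewrite grid_adjxx.
suff : 2 <= #|` S| by rewrite ltnNge S_small.
have <- : #|` [fset x; y]| = 2 by rewrite cardfs2 ne_xy.
apply: fsubset_leq_card; apply/fsubsetP => z.
by rewrite !inE => /orP [] /eqP ->.
Qed.

Section Cut.
Variables (k : nat) (S : {fset point k}).

Lemma num_edges_cut (A : {fset point k}) (E : {fset {fset point k}}) :
  (forall x y, x \in A -> y \in S `\` A -> grid_adj x y -> [fset x; y] \in E) ->
  num_edges S <= #|` E| + num_edges A + num_edges (S `\` A).
Proof.
move=> cross_in_E.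
have sub : induced_edges S `<=` E `|` (induced_edges A `|` induced_edges (S `\` A)).
  apply/fsubsetP => _ /induced_edgesP [x [y [xS yS adj_xy ->]]].
  rewrite !in_fsetU; case xA: (x \in A); case yA: (y \in A).
  - by rewrite (_ : _ \in induced_edges A) ?orbT //; apply/induced_edgesP; exists x, y.
  - by rewrite cross_in_E // in_fsetD yS yA.
  - by rewrite fsetUC cross_in_E // ?in_fsetD ?xS ?xA // grid_adjC.
  - rewrite (_ : _ \in induced_edges (S `\` A)) ?orbT //; apply/induced_edgesP; exists x, y.
    by rewrite !in_fsetD xS yS xA yA.
rewrite /num_edges -addnA; apply: leq_trans (fsubset_leq_card sub) _.
by rewrite cardfsU (leq_trans (leq_subr _ _)) // leq_add2l cardfsU leq_subr.
Qed.

Variables (i : 'I_k) (t : int).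

Definition lower_part : {fset point k} := [fset z in S | (tnth z i <= t)%R].

Lemma lower_upper_lt x y :
  x \in lower_part -> y \in S `\` lower_part -> (tnth x i < tnth y i)%R.
Proof.
rewrite !inE /= => /andP [_ x_le] /andP [y_notin yS].
by rewrite yS /= -ltNge in y_notin; apply: le_lt_trans y_notin.
Qed.

Lemma num_edges_hyperplane_cut :
  num_edges S <= minn #|` lower_part| #|` S `\` lower_part|
                 + num_edges lower_part + num_edges (S `\` lower_part).
Proof.
case: (leqP #|` lower_part| #|` S `\` lower_part|) => _.
- have cross : forall x y, x \in lower_part -> y \in S `\` lower_part ->
      grid_adj x y -> [fset x; y] \in (fun x => [fset x; gshift x i 1]) @` lower_part.
    move=> x y xA yB adj_xy; apply/imfsetP; exists x => //.
    by rewrite (grid_adj_gshift adj_xy (lower_upper_lt xA yB)).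
  apply: leq_trans (num_edges_cut cross) _.
  by rewrite !leq_add2r leq_imfset_card.
- have cross : forall x y, x \in lower_part -> y \in S `\` lower_part -> grid_adj x y ->
      [fset x; y] \in (fun y => [fset gshift y i (-1); y]) @` (S `\` lower_part).
    move=> x y xA yB adj_xy; apply/imfsetP; exists y => //.
    by rewrite (grid_adj_gshift adj_xy (lower_upper_lt xA yB)) gshiftK.
  apply: leq_trans (num_edges_cut cross) _.
  by rewrite !leq_add2r leq_imfset_card.
Qed.

Lemma card_lower_upper : (#|` lower_part| + #|` S `\` lower_part|)%N = #|` S|.
Proof.
have sub : lower_part `<=` S by apply/fsubsetP => z; rewrite inE /= => /andP [].
by rewrite cardfsDS // subnKC // fsubset_leq_card.
Qed.

End Cut.

Lemma exists_lt_coord k (S : {fset point k}) :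
  1 < #|` S| -> exists x y i, [/\ x \in S, y \in S & (tnth x i < tnth y i)%R].
Proof.
move=> S_big; have [x xS] : exists x, x \in S by apply/fset0Pn; rewrite -cardfs_gt0; lia.
have [y] : exists y, y \in S `\ x.
  by apply/fset0Pn; rewrite -cardfs_gt0; move: (cardfsD1 x S); rewrite xS; lia.
rewrite in_fsetD1 => /andP [ne_yx yS].
have [j ne_j] : exists j, tnth x j != tnth y j.
  apply/existsP; apply: contraR ne_yx; rewrite negb_exists => /forallP eq_xy.
  by apply/eqP/eq_from_tnth => j; move/negbNE/eqP: (eq_xy j).
by case/orP: (lt_total ne_j) => lt_j; [exists x, y, j | exists y, x, j].
Qed.

Lemma num_edges_le_max_split k (g : nat -> nat) (hg : is_max_edges_fun k g)
    (S : {fset point k}) : 1 < #|` S| ->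
  num_edges S <= \max_(1 <= n1 < #|` S|) (minn n1 (#|` S| - n1) + g n1 + g (#|` S| - n1)).
Proof.
move=> /exists_lt_coord [x [y [i [xS yS lt_xy]]]].
set A := lower_part S i (tnth x i).
have xA : x \in A by rewrite inE; apply/andP.
have yB : y \in S `\` A by rewrite !inE /= yS leNgt lt_xy.
have card_B : #|` S `\` A| = #|` S| - #|` A| by rewrite -(card_lower_upper S i (tnth x i)) addKn.
have A_pos : 0 < #|` A| by rewrite cardfs_gt0; apply/fset0Pn; exists x.
have B_pos : 0 < #|` S `\` A| by rewrite cardfs_gt0; apply/fset0Pn; exists y.
have A_range : #|` A| \in index_iota 1 #|` S|.
  by rewrite mem_index_iota A_pos -subn_gt0 -card_B.
apply: leq_trans (num_edges_hyperplane_cut S i (tnth x i)) _.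
apply: leq_trans (leq_bigmax_seq _ A_range isT).
by rewrite -card_B -!addnA leq_add2l leq_add // (hg _).1.
Qed.

Local Close Scope fset_scope.

Theorem mainTheorem13 (k : nat) (g : nat -> nat) (hg : is_max_edges_fun k g) :
  g 1 = 0 /\
  forall n : nat, 2 <= n ->
    g n <= \max_(1 <= n1 < n) (minn n1 (n - n1) + g n1 + g (n - n1)).
Proof.
split.
  apply/eqP; rewrite -leqn0; apply: (hg 1).2 => S card_S.
  by rewrite num_edges_card_le1 ?card_S.
move=> n n_ge2; apply: (hg n).2 => S card_S.
by rewrite -card_S num_edges_le_max_split ?card_S.
Qed.
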